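(* Let $k\ge 1$. If $C$ is an odd cycle that is a strict prime $k$th-power distance graph, then every cycle with more vertices than $C$ is also a strict prime $k$th-power distance graph.
   Context: A graph $G$ is a strict prime $k$th-power distance graph if there is an injective map $L:V(G)\to\mathbb{Z}$ such that for every edge $uv$ of $G$, $|L(u)-L(v)|=p^k$ for some prime $p$ (the prime may depend on the edge). *)

From mathcomp Require Import all_boot all_order all_algebra.
Set Implicit Arguments. Unset Strict Implicit. Unset Printing Implicit Defensive.

Definition strict_prime_pow_dist (k : nat) (T : finType) (e : rel T) : Prop :=
  exists L : T -> int, injective L /\
    forall u v : T, e u v -> exists p : nat, prime p /\ `|L u - L v|%N = p ^ k.

(* The cycle C_n on vertex set 'I_n (meaningful as a simple cycle for n >= 3):
   i ~ j iff j = i+1 mod n or i = j+1 mod n. *)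
Definition cycle_rel (n : nat) : rel 'I_n :=
  fun i j => (nat_of_ord j == i.+1 %% n) || (nat_of_ord i == j.+1 %% n).
Arguments cycle_rel n : clear implicits.

From mathcomp Require Import all_boot all_order all_algebra.
From mathcomp Require Import zify.

Set Implicit Arguments.
Unset Strict Implicit.
Unset Printing Implicit Defensive.

Import GRing.Theory.

(** Label a cycle by a sequence [s] of integers read around it. Given a
    labelling [x :: p] of C_m with last label [y], choose a prime [q] with
    [q ^ k] larger than twice every label and append [y + q ^ k] and
    [x + q ^ k]: the new edges have gaps [q ^ k], [y - x] (an old edge, shifted)
    and [q ^ k], and the new labels exceed all old ones in absolute value, so
    this labels C_(m+2). Starting from the odd cycle for odd lengths and from
    the 4-cycle [0, 2^k, 2^k + 3^k, 3^k] for even ones reaches every length. *)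

Lemma cycle_nthP (T : Type) (e : rel T) (x0 : T) (s : seq T) :
  reflect (forall i, i < size s -> e (nth x0 s i) (nth x0 s (i.+1 %% size s)))
          (cycle e s).
Proof.
case: s => [|x p]; first by left.
have nth_rcons_cycle i : i < (size p).+1 ->
    nth x0 (x :: rcons p x) i = nth x0 (x :: p) i /\
    nth x0 (rcons p x) i = nth x0 (x :: p) (i.+1 %% (size p).+1).
  rewrite -rcons_cons !nth_rcons /= ltnS leq_eqVlt => /orP[/eqP-> | lt_ip].
    by rewrite ltnn eqxx modnn.
  by rewrite lt_ip orbT modn_small.
apply: (iffP (pathP x0)); rewrite size_rcons => e_s i /[dup] lt_i /nth_rcons_cycle[].
  by move=> <- <-; apply: e_s.
by move=> -> ->; apply: e_s.
Qed.

Arguments cycle_nthP {T e} x0 {s}.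

Section PrimePowerGaps.

Variable k : nat.
Hypothesis k_gt0 : 0 < k.

Lemma leq_pexpk (p : nat) : 0 < p -> p <= p ^ k.
Proof. by move=> p_gt0; rewrite -{1}(expn1 p) leq_pexp2l. Qed.

Definition prime_pow_gap (a b : int) : bool :=
  [exists p : 'I_`|a - b|.+1, prime p && (`|a - b| == p ^ k)%N].

Lemma prime_pow_gapP (a b : int) :
  reflect (exists p, prime p /\ `|a - b|%N = p ^ k) (prime_pow_gap a b).
Proof.
apply: (iffP existsP) => [[p /andP[pr_p /eqP gap_p]] | [p [pr_p gap_p]]].
  by exists p.
have lt_p : p < `|a - b|.+1.
  by rewrite ltnS gap_p leq_pexpk ?prime_gt0.
by exists (Ordinal lt_p); rewrite /= pr_p gap_p eqxx.
Qed.

Lemma prime_pow_gapC (a b : int) : prime_pow_gap a b = prime_pow_gap b a.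
Proof. by rewrite /prime_pow_gap distnC. Qed.

Lemma prime_pow_gapDr (c a b : int) :
  prime_pow_gap (a + c) (b + c) = prime_pow_gap a b.
Proof. by rewrite /prime_pow_gap opprD addrACA subrr addr0. Qed.

Lemma prime_pow_gap_addr (a : int) (q : nat) :
  prime q -> prime_pow_gap a (a + (q ^ k)%N).
Proof.
move=> pr_q; apply/prime_pow_gapP; exists q; split=> //.
by rewrite opprD addNKr abszN.
Qed.

Notation prime_pow_cycle := (ucycle prime_pow_gap).

Lemma strict_prime_pow_dist_cycleP (m : nat) :
  strict_prime_pow_dist k (cycle_rel m) <->
  exists s : seq int, size s = m /\ prime_pow_cycle s.
Proof.
split=> [[L [inj_L gap_L]] | [s [<- /andP[cyc_s uniq_s]]]].
  have nthL (i : 'I_m) : nth 0%R (map L (enum 'I_m)) i = L i.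
    by rewrite (nth_map i) ?size_enum_ord // nth_ord_enum.
  exists (map L (enum 'I_m)); split; first by rewrite size_map size_enum_ord.
  rewrite /ucycle (map_inj_uniq inj_L) enum_uniq andbT.
  apply/(cycle_nthP 0%R) => i; rewrite size_map size_enum_ord => lt_im.
  have lt_i1m : i.+1 %% m < m by rewrite ltn_mod (leq_ltn_trans _ lt_im).
  rewrite (nthL (Ordinal lt_im)) (nthL (Ordinal lt_i1m)).
  by apply/prime_pow_gapP/gap_L; rewrite /cycle_rel /= eqxx.
exists (fun i : 'I_(size s) => nth 0%R s i); split.
  by move=> i j /eqP; rewrite nth_uniq // => /eqP/val_inj.
have gap_s := cycle_nthP 0%R cyc_s.
move=> u v /orP[] /eqP def; apply/prime_pow_gapP.
  by rewrite def; apply: gap_s.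
by rewrite prime_pow_gapC def; apply: gap_s.
Qed.

Lemma prime_pow_cycle_add2 (s : seq int) :
  1 < size s -> prime_pow_cycle s -> exists s', size s' = (size s).+2 /\ prime_pow_cycle s'.
Proof.
case: s => [|x [|z p]] //= _; set y := last z p.
move=> /andP[cyc_s uniq_s].
pose B := \max_(a <- x :: z :: p) `|a|%N.
have le_B a : a \in x :: z :: p -> `|a|%N <= B.
  by move=> s_a; apply: leq_bigmax_seq.
have [q lt_2B_q pr_q] := prime_above (2 * B).
have lt_2B_Q : 2 * B < q ^ k.
  by apply: leq_trans lt_2B_q _; rewrite leq_pexpk ?prime_gt0.
set Q := (q ^ k)%N in lt_2B_Q.
have s_y : y \in x :: z :: p by rewrite inE mem_last orbT.
exists (x :: z :: p ++ [:: y + Posz Q; x + Posz Q]%R).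
split; first by rewrite /= size_cat addn2.
apply/andP; split.
  move: cyc_s; rewrite /= rcons_cat /= !rcons_path cat_path /= -/y.
  case/andP=> -> /andP[-> gap_yx] /=.
  rewrite prime_pow_gapDr gap_yx prime_pow_gap_addr //.
  by rewrite prime_pow_gapC prime_pow_gap_addr.
have fresh c : c \in x :: z :: p -> (c + Q)%R \notin x :: z :: p.
  by move=> /le_B le_c; apply/negP => /le_B; lia.
have neq_yx : y != x by apply: contraTneq uniq_s => <-; rewrite /= mem_last.
rewrite -!cat_cons cat_uniq uniq_s /= orbF negb_or !fresh ?mem_head //= andbT.
by rewrite inE; apply: contra neq_yx => /eqP/addIr->.
Qed.

Lemma prime_pow_cycle_C4 :
  prime_pow_cycle [:: 0; Posz (2 ^ k); Posz (2 ^ k + 3 ^ k); Posz (3 ^ k)]%R.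
Proof.
have lt_23 : 2 ^ k < 3 ^ k by rewrite ltn_exp2r.
have gap_pow p a b : prime p -> `|a - b|%N = p ^ k -> prime_pow_gap a b.
  by move=> pr_p gap_ab; apply/prime_pow_gapP; exists p.
apply/andP; split; last by rewrite /= !inE; lia.
rewrite /= andbT; apply/and4P.
by split; [apply: (gap_pow 2) | apply: (gap_pow 3) | apply: (gap_pow 2) | apply: (gap_pow 3)];
  rewrite //=; lia.
Qed.

Lemma prime_pow_cycle_grow (s : seq int) (m : nat) :
  1 < size s -> prime_pow_cycle s -> size s <= m -> odd m = odd (size s) ->
  exists s', size s' = m /\ prime_pow_cycle s'.
Proof.
move=> s_gt1 pp_s; elim/ltn_ind: m => m IHm le_sm odd_m.
have [<- | ne_sm] := eqVneq (size s) m; first by exists s.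
have ne_s1m : (size s).+1 != m.
  by apply/eqP => def_m; move: odd_m; rewrite -def_m oddS; case: odd.
have le2m : 2 <= m by lia.
have [s' [size_s' pp_s']] : exists s', size s' = m - 2 /\ prime_pow_cycle s'.
  by apply: IHm; rewrite ?oddB ?addbF //; lia.
have s'_gt1 : 1 < size s' by lia.
have [s'' [size_s'' pp_s'']] := prime_pow_cycle_add2 s'_gt1 pp_s'.
by exists s''; rewrite size_s'' size_s'; split=> //; lia.
Qed.

End PrimePowerGaps.

Theorem mainTheorem14 (k n : nat) :
  1 <= k -> 3 <= n -> odd n ->
  strict_prime_pow_dist k (cycle_rel n) ->
  forall m : nat, n < m -> strict_prime_pow_dist k (cycle_rel m).
Proof.
move=> k_gt0 n_ge3 odd_n /(strict_prime_pow_dist_cycleP k_gt0 n)[s [size_s pp_s]] m lt_nm.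
apply/(strict_prime_pow_dist_cycleP k_gt0 m).
have [odd_m | even_m] := boolP (odd m).
  by apply: (prime_pow_cycle_grow k_gt0 _ pp_s); rewrite size_s ?odd_m ?odd_n //; lia.
apply: (prime_pow_cycle_grow k_gt0 _ (prime_pow_cycle_C4 k_gt0));
  by rewrite /= ?(negbTE even_m) //; lia.
Qed.
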